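(* Let $\Omega\subset(\mathbb R+i\mathbb T)^s$ be a finite set of $N=\#\Omega$ frequencies, $\mathbb T=\mathbb R/2\pi\mathbb Z$, and let $f(x)=\sum_{\omega\in\Omega}f_\omega e^{\omega^Tx}$ with all $f_\omega\in\mathbb C\setminus\{0\}$. Let $X_\Omega=\{x_\omega=(e^{\omega_1},\dots,e^{\omega_s}):\omega\in\Omega\}$, $I_\Omega=\{p\in\Pi:p(x_\omega)=0\ \forall\omega\in\Omega\}$, $\Upsilon_N=\{\alpha\in\mathbb N_0^s:\prod_j(\alpha_j+1)\le N\}$, and let $A\subset\mathbb N_0^s$ be finite. Define $F_{\Upsilon_N,A}=[f(\alpha+\beta)]_{\alpha\in\Upsilon_N,\beta\in A}$. Then a vector $p=(p_\beta)_{\beta\in A}\in\mathbb C^A$ satisfies $F_{\Upsilon_N,A}\,p=0$ if and only if the polynomial $p(x)=\sum_{\beta\in A}p_\beta x^\beta$ belongs to $I_\Omega\cap\Pi_A$.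
   Context: $\Pi=\mathbb C[x_1,\dots,x_s]$; for $A\subset\mathbb N_0^s$, $\Pi_A$ is the span of the monomials $x^\beta$, $\beta\in A$, and a vector in $\mathbb C^A$ is identified with the polynomial in $\Pi_A$ having these coefficients. Restricting imaginary parts of frequencies to $\mathbb T$ makes the points $x_\omega$, $\omega\in\Omega$, pairwise distinct. *)

From HB Require Import structures.
From mathcomp Require Import all_boot all_order all_algebra.
From mathcomp Require Import all_classical all_reals all_analysis.
From mathcomp Require Import complex.
Set Implicit Arguments. Unset Strict Implicit. Unset Printing Implicit Defensive.
Import Order.TTheory GRing.Theory Num.Theory.
Local Open Scope ring_scope.

Definition multi (s : nat) := {ffun 'I_s -> nat}.
Definition maddm (s : nat) (a b : multi s) : multi s := [ffun j => a j + b j].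

Definition cexp (R : realType) (z : R[i]) : R[i] :=
  Complex (expR (complex.Re z) * cos (complex.Im z)) (expR (complex.Re z) * sin (complex.Im z)).

Definition freq (R : realType) (s : nat) := {ffun 'I_s -> R[i]}.

(* Omega subset (R + i T)^s, T = R / 2 pi Z represented by [0, 2 pi) *)
Definition in_RiT (R : realType) (s : nat) (w : freq R s) : Prop :=
  forall j : 'I_s, 0 <= complex.Im (w j) /\ complex.Im (w j) < 2 * pi.

Definition expsum (R : realType) (s : nat) (Om : seq (freq R s))
  (fc : freq R s -> R[i]) (x : multi s) : R[i] :=
  \sum_(w <- Om) fc w * cexp (\sum_(j < s) w j * (x j)%:R).

Definition xpt (R : realType) (s : nat) (w : freq R s) : 'I_s -> R[i] :=
  fun j => cexp (w j).

Definition peval (R : realType) (s : nat) (A : seq (multi s))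
  (p : multi s -> R[i]) (y : 'I_s -> R[i]) : R[i] :=
  \sum_(b <- A) p b * \prod_(j < s) y j ^+ b j.

Definition in_Upsilon (s N : nat) (a : multi s) : bool :=
  (\prod_(j < s) (a j).+1 <= N)%N.

(* (F_{Upsilon_N, A} p)_alpha = 0 for every alpha in Upsilon_N *)
Definition hankel_kernel (R : realType) (s : nat) (Om : seq (freq R s))
  (fc : freq R s -> R[i]) (A : seq (multi s)) (p : multi s -> R[i]) : Prop :=
  forall a : multi s, in_Upsilon (size Om) a ->
    \sum_(b <- A) expsum Om fc (maddm a b) * p b = 0.

(* p in I_Omega (membership in Pi_A is built in by construction) *)
Definition in_ideal_Omega (R : realType) (s : nat) (Om : seq (freq R s))
  (A : seq (multi s)) (p : multi s -> R[i]) : Prop :=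
  forall w, w \in Om -> peval A p (xpt w) = 0.

(* Since f(alpha + beta) = sum_w f_w x_w^alpha x_w^beta, row alpha of
   F_{Upsilon_N,A} p equals sum_w f_w p(x_w) x_w^alpha, and the strip condition
   on the imaginary parts makes the points x_w pairwise distinct.  It remains to
   see that the monomials x^alpha, alpha in Upsilon_N, separate N distinct
   points: if sum_w c_w x_w^alpha = 0 for all such alpha then c = 0.  This goes
   by induction on the number of coordinates needed to tell the points apart.
   Split the points by their value in the next coordinate; among the m values
   choose one, t, carried by the fewest points, say d, so that m d <= N.
   Multiplying by the Lagrange polynomial in that coordinate vanishing at the
   other m - 1 values costs a factor i + 1 <= m in the weight
   prod_j (alpha_j + 1), so it isolates the points over t with weight bound d,
   and the induction hypothesis kills their coefficients; then discard them and
   repeat with the remaining values. *)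

From HB Require Import structures.
From mathcomp Require Import all_boot all_order all_algebra.
From mathcomp Require Import all_classical all_reals all_analysis.
From mathcomp Require Import complex.
From mathcomp Require Import ring lra.
Set Implicit Arguments.
Unset Strict Implicit.
Unset Printing Implicit Defensive.

Import Order.TTheory GRing.Theory Num.Theory.
Local Open Scope ring_scope.

Lemma sum_count_mem_undup (T : eqType) (r : seq T) :
  (\sum_(t <- undup r) count_mem t r)%N = size r.
Proof.
rewrite -(perm_size (perm_count_undup r)) size_flatten /shape -map_comp.
by rewrite sumnE big_map; apply: eq_bigr => t _; rewrite /= size_nseq.
Qed.

Lemma exists_small_count_mem (T : eqType) (r : seq T) : r != [::] ->
  exists2 t, t \in r & (size (undup r) * count_mem t r <= size r)%N.
Proof.
case: r => // t0 r0 _; set r := t0 :: r0.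
have ex_count : exists n, has (fun t => count_mem t r == n) (undup r).
  by exists (count_mem t0 r); apply/hasP; exists t0; rewrite ?mem_undup ?mem_head.
case: (ex_minnP ex_count) => _ /hasP[t tr /eqP <-] t_min.
exists t; first by rewrite -mem_undup.
rewrite -[X in (_ <= X)%N]sum_count_mem_undup mulnC -iter_addn_0 -count_predT.
rewrite -big_const_seq [X in (_ <= X)%N]big_seq big_seq; apply: leq_sum => u ur.
by apply: t_min; apply/hasP; exists u.
Qed.

Section Monomials.
Variables (K : comNzRingType) (s : nat).

Definition monomial (y : 'I_s -> K) (a : multi s) : K := \prod_(j < s) y j ^+ a j.

Definition upsilon_weight (a : multi s) : nat := \prod_(j < s) (a j).+1.

Definition multi_unit (k : 'I_s) (i : nat) : multi s :=
  [ffun j => if j == k then i else 0%N].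

Lemma monomial_maddm y a b : monomial y (maddm a b) = monomial y a * monomial y b.
Proof. by rewrite -big_split; apply: eq_bigr => j _; rewrite ffunE exprD. Qed.

Lemma monomial_unit y k i : monomial y (multi_unit k i) = y k ^+ i.
Proof.
rewrite /monomial (bigD1 k) //= ffunE eqxx big1 ?mulr1 // => j /negbTE jk.
by rewrite ffunE jk expr0.
Qed.

Lemma upsilon_weight_maddm_unit (a : multi s) k i : a k = 0%N ->
  upsilon_weight (maddm a (multi_unit k i)) = (i.+1 * upsilon_weight a)%N.
Proof.
move=> ak0; rewrite /upsilon_weight (bigD1 k) //= [in RHS](bigD1 k) //=.
rewrite !ffunE eqxx ak0 mul1n; congr (_ * _)%N.
by apply: eq_bigr => j /negbTE jk; rewrite !ffunE jk addr0.
Qed.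

End Monomials.

Section SeparatedPoints.
Variables (K : fieldType) (s : nat) (T : eqType) (pt : T -> 'I_s -> K).

Definition supported_below (k : nat) (a : multi s) :=
  forall j : 'I_s, (k <= j)%N -> a j = 0%N.

Definition moments_vanish (k n : nat) (X : seq T) (c : T -> K) :=
  forall a, supported_below k a -> in_Upsilon n a ->
    \sum_(x <- X) c x * monomial (pt x) a = 0.

Definition separated (k : nat) (X : seq T) :=
  {in X &, forall x y, x != y -> exists2 j : 'I_s, (j < k)%N & pt x j != pt y j}.

Definition fiber (kk : 'I_s) (t : K) (X : seq T) := [seq x <- X | pt x kk == t].

Lemma separated_fiber (kk : 'I_s) t X : separated kk.+1 X -> separated kk (fiber kk t X).
Proof.
move=> sepX x y; rewrite !mem_filter => /andP[/eqP xt xX] /andP[/eqP yt yX] xy.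
have [j jk xyj] := sepX x y xX yX xy; exists j => //.
rewrite ltnS leq_eqVlt in jk; case/orP: jk => // /eqP/val_inj jk.
by move: xyj; rewrite jk xt yt eqxx.
Qed.

Lemma separated_filter k (P : pred T) X : separated k X -> separated k [seq x <- X | P x].
Proof. by move=> sepX x y; rewrite !mem_filter => /andP[_ xX] /andP[_ yX]; apply: sepX. Qed.

Lemma moments_vanish_filter k n (P : pred T) X c :
  {in [seq x <- X | P x], forall x, c x = 0} ->
  moments_vanish k n X c -> moments_vanish k n [seq x <- X | ~~ P x] c.
Proof.
move=> cP0 mX a ak an; have := mX a ak an.
rewrite (bigID P) /= big1_seq ?add0r ?big_filter // => x /andP[Px xX].
by rewrite cP0 ?mul0r // mem_filter Px.
Qed.

Lemma moments_vanish_fiber (kk : 'I_s) n d t X c :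
  t \in map (pt^~ kk) X -> (size (undup (map (pt^~ kk) X)) * d <= n)%N ->
  moments_vanish kk.+1 n X c -> moments_vanish kk d (fiber kk t X) c.
Proof.
move=> tX dn mX a akk ad; set V := undup (map (pt^~ kk) X).
pose lagr := \prod_(u <- V | u != t) ('X - u%:P) : {poly K}.
have size_lagr : size lagr = size V.
  have tV : t \in V by rewrite mem_undup.
  rewrite /lagr -big_filter size_prod_XsubC -rem_filter ?undup_uniq // size_rem //.
  by case: (V) tV.
have lagr_t : lagr.[t] != 0.
  rewrite horner_prod prodf_seq_neq0; apply/allP => u _; apply/implyP => ut.
  by rewrite hornerXsubC subr_eq0 eq_sym.
have lagr_other x : x \in X -> pt x kk != t -> lagr.[pt x kk] = 0.
  move=> xX xt; have xV : pt x kk \in V by rewrite mem_undup map_f.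
  by rewrite /lagr (big_rem _ xV) /= xt hornerM hornerXsubC subrr mul0r.
have akk0 : a kk = 0%N by apply: akk.
have sum_lagr : \sum_(x <- X) c x * monomial (pt x) a * lagr.[pt x kk] = 0.
  under eq_bigr => x _ do rewrite horner_coef mulr_sumr.
  rewrite exchange_big big1 //= => i _.
  have -> : \sum_(x <- X) c x * monomial (pt x) a * (lagr`_i * pt x kk ^+ i) =
      lagr`_i * \sum_(x <- X) c x * monomial (pt x) (maddm a (multi_unit kk i)).
    rewrite mulr_sumr; apply: eq_big_seq => x _.
    by rewrite monomial_maddm monomial_unit; ring.
  rewrite mX ?mulr0 //.
  - move=> j kkj; rewrite !ffunE akk ?(ltnW kkj) // add0r.
    by rewrite (negbTE (_ : j != kk)) // neq_ltn kkj orbT.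
  - rewrite /in_Upsilon -/(upsilon_weight _) upsilon_weight_maddm_unit //.
    by rewrite (leq_trans _ dn) // leq_mul // -size_lagr.
have other0 : \sum_(x <- X | pt x kk != t) c x * monomial (pt x) a * lagr.[pt x kk] = 0.
  by rewrite big1_seq // => x /andP[xt xX]; rewrite lagr_other ?mulr0.
apply/eqP; rewrite -(mulIr_eq0 _ (mulIf lagr_t)); apply/eqP.
rewrite -[RHS]sum_lagr [RHS](bigID (fun x => pt x kk == t)) /= other0 addr0.
by rewrite big_filter mulr_suml; apply: eq_bigr => x /eqP ->.
Qed.

Lemma separated_moments_vanish_eq0 k n X c :
  (k <= s)%N -> uniq X -> separated k X -> (size X <= n)%N ->
  moments_vanish k n X c -> {in X, forall x, c x = 0}.
Proof.
elim: k n X c => [|k IHk] n X c ks uX sepX Xn mX.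
  case: X uX sepX Xn mX => [//|x [|y X']] uX sepX Xn mX; last first.
    have xy : x != y by move: uX; rewrite /= inE negb_or => /andP[/andP[]].
    have yX : y \in [:: x, y & X'] by rewrite !inE eqxx orbT.
    by have [] := sepX x y (mem_head _ _) yX xy.
  move=> y; rewrite mem_seq1 => /eqP ->.
  pose a0 : multi s := [ffun=> 0%N].
  have in0 : in_Upsilon n a0 by rewrite /in_Upsilon big1 // => j _; rewrite ffunE.
  have := mX a0 (fun j _ => ffunE _ j) in0.
  by rewrite big_seq1 /monomial big1 ?mulr1 // => j _; rewrite ffunE.
have [L] := ubnP (size X); elim: L X uX sepX Xn mX => // L IHL X uX sepX Xn mX XL x xX.
pose kk := Ordinal ks.
have [t tX small] : exists2 t, t \in map (pt^~ kk) X &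
    (size (undup (map (pt^~ kk) X)) * size (fiber kk t X) <= size X)%N.
  have /exists_small_count_mem : map (pt^~ kk) X != [::] by case: (X) xX.
  rewrite size_map => -[t tX]; rewrite count_map => small.
  by exists t; rewrite // size_filter.
have fiber0 : {in fiber kk t X, forall y, c y = 0}.
  apply: (IHk (size (fiber kk t X))) => //; first exact: ltnW.
  - exact: filter_uniq.
  - exact: separated_fiber.
  - exact: (moments_vanish_fiber tX (leq_trans small Xn)).
have [xt|xt] := boolP (pt x kk == t); first by apply: fiber0; rewrite mem_filter xt.
apply: (IHL [seq y <- X | pt y kk != t]); rewrite ?mem_filter ?xt //.
- exact: filter_uniq.
- exact: separated_filter.
- by rewrite (leq_trans _ Xn) // size_filter count_size.
- exact: moments_vanish_filter.
- rewrite -ltnS (leq_trans _ XL) // ltnS size_filter.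
  rewrite -(count_predC (fun y => pt y kk == t)) addnC -[X in (X < _)%N]addn0.
  rewrite ltn_add2l -has_count; apply/hasP.
  by have /mapP[y yX ->] := tX; exists y.
Qed.

End SeparatedPoints.

Section ComplexExponential.
Variable R : realType.

Lemma cexpD (a b : R[i]) : cexp (a + b) = cexp a * cexp b.
Proof.
case: a => a1 a2; case: b => b1 b2.
rewrite /cexp /= expRD cosD sinD.
by apply/eqP; rewrite eq_complex /=; apply/andP; split; apply/eqP; ring.
Qed.

Lemma cexp0 : cexp (0 : R[i]) = 1.
Proof. by rewrite /cexp /= expR0 cos0 sin0 mulr1 mulr0. Qed.

Lemma cexp_sum (I : Type) (r : seq I) (F : I -> R[i]) :
  cexp (\sum_(i <- r) F i) = \prod_(i <- r) cexp (F i).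
Proof. exact: (big_morph _ cexpD cexp0). Qed.

Lemma cexpM_natr (a : R[i]) n : cexp (a * n%:R) = cexp a ^+ n.
Proof.
elim: n => [|n IHn]; first by rewrite mulr0 cexp0.
by rewrite -addn1 natrD mulrDr mulr1 cexpD IHn exprD expr1.
Qed.

Lemma cexp_neq0 (z : R[i]) : cexp z != 0.
Proof.
apply/eqP => z0; have := cexpD z (- z).
by rewrite subrr cexp0 z0 mul0r; apply/eqP; rewrite oner_eq0.
Qed.

Lemma sin_eq0_ltpi (x : R) : `|x| < pi -> sin x = 0 -> x = 0.
Proof.
move=> xpi sx0; case: (ltgtP x 0) => // x0.
  have : 0 < sin (- x) by apply: sin_gt0_pi; rewrite oppr_gt0 x0 -(ltr0_norm x0).
  by rewrite sinN sx0 oppr0 ltxx.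
have : 0 < sin x by apply: sin_gt0_pi; rewrite x0 -(gtr0_norm x0).
by rewrite sx0 ltxx.
Qed.

Lemma cos_eq1_lt2pi (y : R) : `|y| < 2 * pi -> cos y = 1 -> y = 0.
Proof.
move=> ypi cy1; pose h := y / 2.
have yh : y = h *+ 2 by rewrite /h mulr2n -splitr.
have sh0 : sin h = 0.
  have : cos h ^+ 2 = 1 by move: cy1; rewrite yh cos_mulr2n mulr2n; lra.
  by move/eqP; rewrite cos2sin2 subr_eq addrC -subr_eq subrr eq_sym sqrf_eq0 => /eqP.
suff h0 : h = 0 by rewrite yh h0 mul0rn.
apply: sin_eq0_ltpi sh0; rewrite /h normrM normfV normr_nat; lra.
Qed.

Lemma cexp_eq1 (z : R[i]) : `|complex.Im z| < 2 * pi -> cexp z = 1 -> z = 0.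
Proof.
case: z => x y /= ypi /eqP; rewrite eq_complex /= => /andP[/eqP Ec /eqP Es].
have sy0 : sin y = 0.
  by move/eqP: Es; rewrite mulf_eq0 expR_eq0 => /eqP.
have cy1 : cos y = 1.
  have cy_gt0 : 0 < cos y by rewrite -(pmulr_rgt0 _ (expR_gt0 x)) Ec.
  by rewrite -(gtr0_norm cy_gt0) sin0cos1.
have x0 : x = 0 by apply: expR_inj; rewrite expR0 -Ec cy1 mulr1.
by rewrite x0 (cos_eq1_lt2pi ypi cy1).
Qed.

Lemma cexp_inj (a b : R[i]) :
  `|complex.Im a - complex.Im b| < 2 * pi -> cexp a = cexp b -> a = b.
Proof.
move=> ab_pi eab; apply/eqP; rewrite -subr_eq0; apply/eqP/cexp_eq1.
  by case: a b {eab} ab_pi => [a1 a2] [b1 b2].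
by apply: (mulIf (cexp_neq0 b)); rewrite -cexpD subrK mul1r.
Qed.

End ComplexExponential.

Lemma expsumE (R : realType) s (Om : seq (freq R s)) fc x :
  expsum Om fc x = \sum_(w <- Om) fc w * monomial (xpt w) x.
Proof.
apply: eq_big_seq => w _; rewrite cexp_sum; congr (_ * _).
by apply: eq_bigr => j _; rewrite cexpM_natr.
Qed.

Lemma hankel_rowE (R : realType) s (Om : seq (freq R s)) fc A p a :
  \sum_(b <- A) expsum Om fc (maddm a b) * p b =
  \sum_(w <- Om) fc w * peval A p (xpt w) * monomial (xpt w) a.
Proof.
under eq_big_seq => b _ do rewrite expsumE mulr_suml.
rewrite exchange_big; apply: eq_big_seq => w _.
rewrite /peval mulr_sumr mulr_suml; apply: eq_big_seq => b _.
by rewrite monomial_maddm /monomial; ring.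
Qed.

Lemma xpt_separated (R : realType) s (Om : seq (freq R s)) :
  (forall w, w \in Om -> in_RiT w) -> separated (@xpt R s) s Om.
Proof.
move=> Om_strip v w vO wO vw.
have [/existsP[j vwj] | ] := boolP [exists j, xpt v j != xpt w j]; first by exists j.
rewrite negb_exists => /forallP same; case/eqP: vw; apply/ffunP => j.
apply: cexp_inj; last exact/eqP/negPn/same.
have [v0 v2] := Om_strip v vO j; have [w0 w2] := Om_strip w wO j.
rewrite ltr_norml; apply/andP; split; lra.
Qed.

Theorem theorem28 (R : realType) (s : nat) (Om : seq (freq R s))
  (fc : freq R s -> R[i]) (A : seq (multi s)) :
  uniq Om ->
  (forall w, w \in Om -> in_RiT w) ->
  (forall w, w \in Om -> fc w != 0) ->
  uniq A ->
  forall p : multi s -> R[i],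
    hankel_kernel Om fc A p <-> in_ideal_Omega Om A p.
Proof.
move=> uOm Om_strip fc_neq0 _ p; split => [hk w wO | pI a _].
  have moments : moments_vanish (@xpt R s) s (size Om) Om
      (fun w => fc w * peval A p (xpt w)).
    by move=> a _ aU; rewrite -hankel_rowE; apply: hk.
  have /eqP := separated_moments_vanish_eq0 (leqnn s) uOm (xpt_separated Om_strip)
    (leqnn _) moments wO.
  by rewrite mulf_eq0 (negbTE (fc_neq0 w wO)) => /eqP.
rewrite hankel_rowE big1_seq // => w /andP[_ wO].
by rewrite pI // mulr0 mul0r.
Qed.
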